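(* Let $\mu_2>\mu_1>-\frac12$. For $\mu\in\{\mu_1,\mu_2\}$ define the normalized generalized Hermite polynomials $\widehat H^{\mu}_n(x)=\frac{\gamma_\mu(n)}{n!\,\lfloor n/2\rfloor!}H^\mu_n(x)$. Then for every $n\ge0$, $$\widehat H^{\mu_2}_n(x)=\sum_{k=0}^{\lfloor n/2\rfloor}\frac{(-1)^k4^k}{k!}(\mu_2-\mu_1)_k\,\widehat H^{\mu_1}_{n-2k}(x).$$ Equivalently, $H^{\mu_2}_n(x)=\sum_{k=0}^{\lfloor n/2\rfloor}C_{n-2k}(n)H^{\mu_1}_{n-2k}(x)$ with $$C_{n-2k}(n)=\frac{(-1)^k}{k!}\frac{n!}{(n-2k)!}\frac{4^k\lfloor n/2\rfloor!}{(\lfloor n/2\rfloor-k)!}\frac{\gamma_{\mu_1}(n-2k)}{\gamma_{\mu_2}(n)}(\mu_2-\mu_1)_k .$$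
   Context: For $\mu\notin\{-\frac12,-\frac32,\dots\}$ and $n=2p+\epsilon$ ($\epsilon\in\{0,1\}$), $\gamma_\mu(n)=2^{2p+\epsilon}p!\,(\mu+\frac12)_{p+\epsilon}$, with $(\alpha)_n=\Gamma(\alpha+n)/\Gamma(\alpha)$; $\exp_\mu(x)=\sum_{n\ge0}x^n/\gamma_\mu(n)$. The generalized Hermite (Szegő–Chihara) polynomials $H^\mu_n$ are defined by $e^{-t^2}\exp_\mu(2xt)=\sum_{n\ge0}H^\mu_n(x)t^n/n!$. *)

From mathcomp Require Import all_boot all_order all_algebra.
Set Implicit Arguments. Unset Strict Implicit. Unset Printing Implicit Defensive.
Import Order.TTheory GRing.Theory Num.Theory.
Local Open Scope ring_scope.

Definition poch {R : pzRingType} (a : R) (n : nat) : R :=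
  \prod_(i < n) (a + i%:R).

Definition gammamu {R : fieldType} (mu : R) (n : nat) : R :=
  2%:R ^+ n * (n./2)`!%:R * poch (mu + 2%:R^-1) (n./2 + odd n).

(* Coefficients of t^k in e^{-t^2} = sum_j (-1)^j t^(2j) / j!. *)
Definition expm_sq_coef {R : fieldType} (k : nat) : R :=
  if odd k then 0 else (-1) ^+ (k./2) / (k./2)`!%:R.

(* Coefficients of t^m in exp_mu(2 x t) = sum_m (2x)^m t^m / gamma_mu(m). *)
Definition expmu_coef {R : fieldType} (mu x : R) (m : nat) : R :=
  (2%:R * x) ^+ m / gammamu mu m.

(* Generalized Hermite polynomial: H^mu_n(x) = n! * [t^n] (e^{-t^2} exp_mu(2xt)),
   the coefficient extraction being the Cauchy product of the two series. *)
Definition Hermite {R : fieldType} (mu : R) (n : nat) (x : R) : R :=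
  n`!%:R * \sum_(i < n.+1) expm_sq_coef i * expmu_coef mu x (n - i).

Definition Hhat {R : fieldType} (mu : R) (n : nat) (x : R) : R :=
  gammamu mu n / (n`!%:R * (n./2)`!%:R) * Hermite mu n x.

Definition Ccoef {R : fieldType} (mu1 mu2 : R) (n k : nat) : R :=
  (-1) ^+ k / k`!%:R * (n`!%:R / (n - 2 * k)`!%:R)
  * (4%:R ^+ k * (n./2)`!%:R / (n./2 - k)`!%:R)
  * (gammamu mu1 (n - 2 * k) / gammamu mu2 n) * poch (mu2 - mu1) k.

From mathcomp Require Import all_boot all_order all_algebra.
From mathcomp Require Import zify ring.
Set Implicit Arguments. Unset Strict Implicit. Unset Printing Implicit Defensive.
Import Order.TTheory GRing.Theory Num.Theory.
Local Open Scope ring_scope.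

(* Write n = e + 2p with e = odd n.  Extracting the coefficient of t^n in
   e^{-t^2} exp_mu(2xt) and simplifying gamma_mu gives the explicit form
     Hhat^mu_n(x) = sum_(j <= p) (-4)^j / (j! (p-j)!)
                      (mu + 1/2 + p - j + e)_j (2x)^(n-2j)            (Hhat_explicit)
   (the summand is [hhat_term]).  Substituting this for every Hhat^mu1_(n-2k)
   on the right-hand side of the connection formula and regrouping the
   double sum along the diagonals j = k + i (sum_triangle), the coefficient
   of (2x)^(n-2j) becomes a convolution of Pochhammer symbols, which the
   Chu-Vandermonde identity
     (c + b)_j / j! = sum_(k <= j) (b)_k / k! * (c)_(j-k) / (j-k)!
   (poch_vandermonde, with b = mu2 - mu1) collapses to the coefficient in
   Hhat^mu2_n.  The second form of the theorem is the first one rescaled by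
   H^mu_n = n! floor(n/2)! / gamma_mu(n) * Hhat^mu_n (Hermite_Hhat). *)

Lemma natr_fact_neq0 (R : numDomainType) (n : nat) : n`!%:R != 0 :> R.
Proof. by rewrite pnatr_eq0 -lt0n fact_gt0. Qed.

Section Pochhammer.

Lemma poch0 (R : pzRingType) (a : R) : poch a 0 = 1.
Proof. by rewrite /poch big_ord0. Qed.

Lemma poch_recr (R : pzRingType) (a : R) (m : nat) :
  poch a m.+1 = poch a m * (a + m%:R).
Proof. by rewrite /poch big_ord_recr. Qed.

Lemma poch_add (R : pzRingType) (a : R) (m i : nat) :
  poch a (m + i) = poch a m * poch (a + m%:R) i.
Proof.
rewrite /poch big_split_ord /=; congr (_ * _); apply: eq_bigr => k _.
by rewrite /= natrD addrA.
Qed.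

Lemma poch_gt0 (R : numDomainType) (a : R) (m : nat) : 0 < a -> 0 < poch a m.
Proof. by move=> a_gt0; apply: prodr_gt0 => i _; apply: ltr_wpDr. Qed.

Lemma poch_binomial (R : comPzRingType) (b c : R) (j : nat) :
  poch (c + b) j = \sum_(k < j.+1) 'C(j, k)%:R * poch b k * poch c (j - k).
Proof.
elim: j => [|j IH]; first by rewrite big_ord1 subn0 !poch0 mul1r mulr1.
rewrite poch_recr IH mulr_suml.
(* Pascal's rule, after splitting (c + b + j) = (b + k) + (c + (j - k)). *)
transitivity (\sum_(k < j.+1) 'C(j, k)%:R * poch b k.+1 * poch c (j - k) +
              \sum_(k < j.+1) 'C(j, k)%:R * poch b k * poch c (j - k).+1).
  rewrite -big_split /=; apply: eq_bigr => k _.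
  have le_kj : (k <= j)%N by rewrite -ltnS.
  by rewrite !poch_recr natrB //; ring.
rewrite [RHS]big_ord_recl /= subn0 bin0 poch0 !mul1r.
under [X in _ = _ + X]eq_bigr => k _ do
  rewrite /bump /= add1n subSS binS natrD !mulrDl.
rewrite big_split /= addrA [LHS]addrC; congr (_ + _).
rewrite big_ord_recl /= bin0 poch0 !mul1r subn0; congr (_ + _).
rewrite big_ord_recr /= bin_small // !mul0r addr0.
apply: eq_bigr => k _; rewrite /bump /= add1n.
by congr (_ * poch _ _); have := ltn_ord k; lia.
Qed.

Lemma poch_vandermonde (R : numFieldType) (b c : R) (j : nat) :
  poch (c + b) j / j`!%:R =
  \sum_(k < j.+1) (poch b k / k`!%:R) * (poch c (j - k) / (j - k)%N`!%:R).
Proof.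
rewrite poch_binomial mulr_suml; apply: eq_bigr => -[k lt_kj] _ /=.
have /(congr1 (fun n => n%:R : R)) := bin_fact (lt_kj : (k <= j)%N).
rewrite !natrM => <-.
by field; rewrite !natr_fact_neq0 pnatr_eq0 -lt0n bin_gt0 -ltnS.
Qed.

End Pochhammer.

Section Reindexing.
Variable V : nmodType.

Lemma sum_even_terms (F : nat -> V) (n : nat) : (forall i, odd i -> F i = 0) ->
  \sum_(i < n.+1) F i = \sum_(j < n./2.+1) F j.*2.
Proof.
move=> F_odd; elim: n => [|n IH]; first by rewrite !big_ord1.
rewrite big_ord_recr /= IH uphalf_half.
case odd_n: (odd n) => /=.
  by rewrite [RHS]big_ord_recr /=; congr (_ + F _); lia.
by rewrite F_odd ?addr0 //= odd_n.
Qed.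

Lemma sum_triangle (G : nat -> nat -> V) (m : nat) :
  \sum_(k < m.+1) \sum_(i < (m - k)%N.+1) G k i =
  \sum_(j < m.+1) \sum_(k < j.+1) G k (j - k)%N.
Proof.
elim: m => [|m IH]; first by rewrite !big_ord1.
rewrite big_ord_recr /= subnn big_ord1.
rewrite [RHS]big_ord_recr /= -IH [X in _ = _ + X]big_ord_recr /= subnn addrA.
congr (_ + _); rewrite -big_split /=; apply: eq_bigr => -[k lt_km] _ /=.
by rewrite big_ord_recr /= (subSn (lt_km : (k <= m)%N)).
Qed.

End Reindexing.

Section Connection.
Variable R : numFieldType.
Implicit Types (mu x : R) (e : bool) (p j k : nat).

Lemma gammamu_split mu e m :
  gammamu mu (e + m.*2) = 2%:R ^+ (e + m.*2) * m`!%:R * poch (mu + 2^-1) (m + e).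
Proof.
rewrite /gammamu (_ : (e + m.*2)./2 = m); last by lia.
by rewrite (_ : odd (e + m.*2) = e) //; lia.
Qed.

Lemma poch_shifted_gt0 mu m : - 2%:R^-1 < mu -> 0 < poch (mu + 2%:R^-1) m.
Proof. by move=> mu_gt; rewrite poch_gt0 // -(opprK (2%:R^-1)) subr_gt0. Qed.

Lemma gammamu_neq0 mu n : - 2%:R^-1 < mu -> gammamu mu n != 0.
Proof.
move=> mu_gt; rewrite /gammamu !mulf_neq0 ?natr_fact_neq0 ?expf_neq0 //.
  by rewrite pnatr_eq0.
by rewrite lt0r_neq0 // poch_shifted_gt0.
Qed.

Definition hhat_term mu x p e j : R :=
  (-1) ^+ j * 4%:R ^+ j / (j`!%:R * (p - j)%N`!%:R)
  * poch (mu + 2%:R^-1 + (p - j + e)%:R) j * (2%:R * x) ^+ (e + (p - j).*2).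

Lemma Hhat_explicit mu x e p : - 2%:R^-1 < mu ->
  Hhat mu (e + p.*2) x = \sum_(j < p.+1) hhat_term mu x p e j.
Proof.
move=> mu_gt; rewrite /Hhat /Hermite.
rewrite (@sum_even_terms _ (fun i => expm_sq_coef i * expmu_coef mu x (e + p.*2 - i)));
  last by move=> i odd_i; rewrite /expm_sq_coef odd_i mul0r.
rewrite (_ : (e + p.*2)./2 = p); last by lia.
rewrite !mulr_sumr; apply: eq_bigr => -[j lt_jp] _ /=.
rewrite /expm_sq_coef odd_double doubleK /expmu_coef /hhat_term.
have [m ->] : exists m, p = (m + j)%N by exists (p - j)%N; lia.
rewrite addnK (_ : e + (m + j).*2 - j.*2 = e + m.*2)%N; last by lia.
rewrite !gammamu_split (_ : (m + j + e = (m + e) + j)%N); last by lia.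
rewrite poch_add.
have pow2_split : 2%:R ^+ (e + (m + j).*2) = 2%:R ^+ (e + m.*2) * 4%:R ^+ j :> R.
  by rewrite doubleD addnA exprD -(mul2n j) exprM expr2 -natrM.
rewrite pow2_split.
have poch_pos := poch_shifted_gt0 (m + e) mu_gt.
by field; rewrite ?natr_fact_neq0 ?expf_neq0 ?pnatr_eq0 ?lt0r_neq0.
Qed.

Definition connection_coef (mu1 mu2 : R) k : R :=
  ((-1) ^+ k * 4%:R ^+ k / k`!%:R) * poch (mu2 - mu1) k.

(* Diagonal form of the connection formula: the coefficient of (2x)^(n-2j) in
   Hhat^mu2_n is obtained from those of the Hhat^mu1_(n-2k) by Chu-Vandermonde. *)
Lemma hhat_term_connection mu1 mu2 x p e j : (j <= p)%N ->
  hhat_term mu2 x p e j =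
  \sum_(k < j.+1) connection_coef mu1 mu2 k * hhat_term mu1 x (p - k) e (j - k).
Proof.
move=> le_jp; pose c := mu1 + 2%:R^-1 + (p - j + e)%:R.
pose a := (-1) ^+ j * 4%:R ^+ j / (p - j)%N`!%:R * (2%:R * x) ^+ (e + (p - j).*2).
transitivity (a * \sum_(k < j.+1)
    (poch (mu2 - mu1) k / k`!%:R * (poch c (j - k) / (j - k)%N`!%:R))); last first.
  rewrite mulr_sumr; apply: eq_bigr => -[k lt_kj] _ /=.
  rewrite /connection_coef /hhat_term /c /a (_ : (p - k - (j - k) = p - j)%N); last by lia.
  have [i ->] : exists i, j = (k + i)%N by exists (j - k)%N; lia.
  rewrite addKn !exprD.
  by field; rewrite ?natr_fact_neq0.
rewrite -poch_vandermonde /hhat_term /a /c.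
rewrite (_ : _ + (mu2 - mu1) = mu2 + 2%:R^-1 + (p - j + e)%:R); last by ring.
by field; rewrite ?natr_fact_neq0.
Qed.

Lemma Hhat_connection mu1 mu2 x e p :
  - 2%:R^-1 < mu1 -> - 2%:R^-1 < mu2 ->
  Hhat mu2 (e + p.*2) x =
    \sum_(k < p.+1) connection_coef mu1 mu2 k * Hhat mu1 (e + p.*2 - 2 * k) x.
Proof.
move=> mu1_gt mu2_gt; rewrite Hhat_explicit //.
transitivity (\sum_(k < p.+1) \sum_(i < (p - k)%N.+1)
    connection_coef mu1 mu2 k * hhat_term mu1 x (p - k) e i); last first.
  apply: eq_bigr => -[k lt_kp] _ /=.
  rewrite (_ : (e + p.*2 - 2 * k = e + (p - k).*2)%N); last by lia.
  by rewrite Hhat_explicit // mulr_sumr.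
rewrite (sum_triangle (fun k i =>
  connection_coef mu1 mu2 k * hhat_term mu1 x (p - k) e i)).
by apply: eq_bigr => -[j lt_jp] _; rewrite (@hhat_term_connection mu1).
Qed.

Lemma Hermite_Hhat mu x n : - 2%:R^-1 < mu ->
  Hermite mu n x = n`!%:R * (n./2)`!%:R / gammamu mu n * Hhat mu n x.
Proof.
by move=> mu_gt; rewrite /Hhat; field; rewrite ?natr_fact_neq0 ?gammamu_neq0.
Qed.

End Connection.

Theorem mainTheorem14 (R : realFieldType) (mu1 mu2 : R)
    (hmu1 : - 2%:R^-1 < mu1) (hmu12 : mu1 < mu2) (n : nat) (x : R) :
  Hhat mu2 n x =
    \sum_(k < (n./2).+1)
       ((-1) ^+ k * 4%:R ^+ k / k`!%:R) * poch (mu2 - mu1) k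
       * Hhat mu1 (n - 2 * k) x
  /\
  Hermite mu2 n x =
    \sum_(k < (n./2).+1) Ccoef mu1 mu2 n k * Hermite mu1 (n - 2 * k) x.
Proof.
have hmu2 : - 2%:R^-1 < mu2 by apply: lt_trans hmu12.
rewrite -[n](odd_double_half n); set e := odd n; set p := n./2.
have half_n : ((e + p.*2)./2 = p)%N by lia.
have hhat_conn := Hhat_connection x e p hmu1 hmu2.
rewrite half_n; split; first exact: hhat_conn.
rewrite Hermite_Hhat // hhat_conn mulr_sumr; apply: eq_bigr => -[k lt_kp] _ /=.
rewrite (Hermite_Hhat x (e + p.*2 - 2 * k) hmu1) /Ccoef /connection_coef half_n.
rewrite (_ : ((e + p.*2 - 2 * k)./2 = p - k)%N); last by lia.
by field; rewrite ?natr_fact_neq0 ?gammamu_neq0.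
Qed.
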